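(* Let $T>0$, $\gamma\in(0,1]$, $C_T=\{(t,s):0<s<t<T\}$, and let $g_1,g_2$ be Hölder continuous functions of order $\gamma$ on $C_T$. Define, for $(t,s)\in C_T$, $$h(t,s)=\int_s^t\frac{g_1(t,z)\,g_2(z,s)}{\sqrt{t-z}\,\sqrt{z-s}}\,dz.$$ Then $h$ is Hölder continuous of order $\gamma$ on $C_T$. *)

From HB Require Import structures.
From mathcomp Require Import all_boot all_order all_algebra.
From mathcomp Require Import all_classical all_reals all_analysis.
Set Implicit Arguments. Unset Strict Implicit. Unset Printing Implicit Defensive.
Import Order.TTheory GRing.Theory Num.Theory.
Local Open Scope ring_scope.
Local Open Scope classical_set_scope.

Definition inCT {R : realType} (T t s : R) : Prop := 0 < s /\ s < t /\ t < T.

Definition holder_CT {R : realType} (T gam : R) (f : R -> R -> R) : Prop :=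
  exists K : R, forall t s t' s', inCT T t s -> inCT T t' s' ->
    `|f t s - f t' s'| <= K * (`|t - t'| `^ gam + `|s - s'| `^ gam).

Definition hconv {R : realType} (g1 g2 : R -> R -> R) (t s : R) : R :=
  Rintegral (@lebesgue_measure R) `]s, t[
    (fun z => g1 t z * g2 z s / (Num.sqrt (t - z) * Num.sqrt (z - s))).

From HB Require Import structures.
From mathcomp Require Import all_boot all_order all_algebra.
From mathcomp Require Import all_classical all_reals all_analysis.
From mathcomp Require Import measurable_realfun.
From mathcomp Require Import ring lra.
Import numFieldNormedType.Exports.
Import Order.TTheory GRing.Theory Num.Theory.
Local Open Scope ring_scope.
Local Open Scope classical_set_scope.

(* The substitution z = s + (t - s) u turns h(t, s) into
   \int_0^1 g1(t, z) g2(z, s) w(u) du with the weight w(u) = 1 / sqrt(u (1 - u)),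
   whose integral pi (a primitive is asin (2 u - 1)) no longer depends on (t, s).
   Moving (t, s) to (t', s') moves z by a convex combination of t - t' and s - s', so
   writing g1 g2 - g1' g2' = g1 (g2 - g2') + g2' (g1 - g1') and using that Hölder
   functions on the bounded triangle are bounded gives
   |h(t, s) - h(t', s')| <= 2 pi (M1 K2 + M2 K1) (|t - t'|^gam + |s - s'|^gam). *)

Section affine_change_of_variables.
Context {R : realType}.
Local Notation mu := (@lebesgue_measure R).
Variables (a d : R).
Hypothesis d_gt0 : 0 < d.

Lemma measurable_affine : measurable_fun [set: R] (fun u : R => a + d * u).
Proof.
apply: measurable_funD; first exact: measurable_cst.
by apply: measurable_funM; [exact: measurable_cst | exact: measurable_id].
Qed.

Lemma lebesgue_measure_affine (A : set R) : measurable A ->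
  mu A = pushforward (mscale (NngNum (ltW d_gt0)) mu) (fun u : R => a + d * u) A.
Proof.
move: A; unshelve refine (@lebesgue_measure_unique R
  (@pushforward _ _ (measurableTypeR R) (measurableTypeR R) R
     (mscale (NngNum (ltW d_gt0)) mu) (fun u : R => a + d * u)
   : {measure set (measurableTypeR R) -> \bar R}) _).
  exact: measurable_affine.
move=> _ [[x1 x2] _ <-].
change (mu `]x1, x2] = d%:E * mu ((fun u : R => a + d * u)%R @^-1` `]x1, x2]))%E.
rewrite (_ : _ @^-1` _ = `](x1 - a) / d, (x2 - a) / d]); last first.
  by apply/seteqP; split=> u /=; rewrite !in_itv /= ltr_pdivrMr // ler_pdivlMr //
    [u * d]mulrC [_ < d * u]ltrBlDl [d * u <= _]lerBrDl.
rewrite !lebesgue_measure_itv /= !lte_fin ltr_pM2r ?invr_gt0 // ltrD2r.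
case: ifPn => _; last by rewrite mule0.
by rewrite -!EFinD -EFinM; congr EFin; field; exact: lt0r_neq0.
Qed.

Lemma ge0_integral_affine (D : set R) (g : R -> \bar R) :
  measurable D -> measurable_fun D g -> (forall x, D x -> (0 <= g x)%E) ->
  (\int[mu]_(x in D) g x =
   d%:E * \int[mu]_(u in (fun u : R => a + d * u)%R @^-1` D) g (a + d * u)%R)%E.
Proof.
move=> mD mg g0.
pose nu := @measure_function_pushforward__canonical__measure_function_Measure
  _ _ (measurableTypeR R) (measurableTypeR R) R
  (mscale (NngNum (ltW d_gt0)) mu) (fun u : R => a + d * u) measurable_affine.
rewrite (eq_measure_integral nu); last by move=> A mA _; exact: lebesgue_measure_affine.
rewrite (@ge0_integral_pushforward _ _ (measurableTypeR R) (measurableTypeR R) R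
  _ measurable_affine) //; last by move=> y /set_mem; exact: g0.
rewrite ge0_integral_mscale //.
- by rewrite -[X in measurable X]setTI; exact: measurable_affine.
- apply: (measurable_comp mD _ mg); first by move=> _ [x Dx <-].
  exact: measurable_funTS measurable_affine.
- by move=> x Dx; exact: g0.
Qed.

Lemma Rintegral_affine (D : set R) (f : R -> R) :
  measurable D -> measurable_fun D f ->
  mu.-integrable ((fun u : R => a + d * u) @^-1` D)
    (EFin \o (fun u => f (a + d * u))) ->
  \int[mu]_(x in D) f x =
  d * \int[mu]_(u in (fun u : R => a + d * u) @^-1` D) f (a + d * u).
Proof.
set P := _ @^-1` D => mD mf intf.
have mP : measurable P by rewrite -[P]setTI; exact: measurable_affine.
have mEf : measurable_fun D (EFin \o f) by exact/measurable_EFinP.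
rewrite /Rintegral integralE.
rewrite (ge0_integral_affine _ _ mD (measurable_funepos mEf)) => [|x _]; last exact: funepos_ge0.
rewrite (ge0_integral_affine _ _ mD (measurable_funeneg mEf)) => [|x _]; last exact: funeneg_ge0.
rewrite [X in _ = _ * fine X]integralE.
set fd := EFin \o (fun u => f (a + d * u)).
have -> : (\int[mu]_(u in P) (EFin \o f)^\+ (a + d * u)%R = \int[mu]_(u in P) fd^\+ u)%E.
  by apply: eq_integral => u _; rewrite !funeposE.
have -> : (\int[mu]_(u in P) (EFin \o f)^\- (a + d * u)%R = \int[mu]_(u in P) fd^\- u)%E.
  by apply: eq_integral => u _; rewrite !funenegE.
have fin_pos : (\int[mu]_(u in P) fd^\+ u)%E \is a fin_num.
  by apply: integrable_fin_num => //; exact: integrable_funepos.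
have fin_neg : (\int[mu]_(u in P) fd^\- u)%E \is a fin_num.
  by apply: integrable_fin_num => //; exact: integrable_funeneg.
by rewrite -muleBr ?fin_num_adde_defr // fineM // fin_numB fin_pos.
Qed.

End affine_change_of_variables.

Section arcsine_weight.
Context {R : realType}.
Local Notation mu := (@lebesgue_measure R).

Lemma ge0_integral_itvoo01_le (f : R -> R) (C : \bar R) :
  measurable_fun (`]0, 1[ : set R) f -> (forall x, 0 < x < 1 -> 0 <= f x) ->
  (forall a b, 0 < a -> a < b -> b < 1 -> (\int[mu]_(x in `[a, b]) (f x)%:E <= C)%E) ->
  (\int[mu]_(x in (`]0%R, 1%R[ : set R)) (f x)%:E <= C)%E.
Proof.
move=> mf f0 fC.
pose c (n : nat) : R := n.+3%:R^-1.
have c_gt0 n : 0 < c n by rewrite invr_gt0.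
have c_antimono m n : (m <= n)%N -> c n <= c m.
  by move=> mn; rewrite lef_pV2 ?posrE // ler_nat !ltnS.
have c_le3 n : c n <= 3^-1 by apply: (c_antimono 0%N).
pose F n := `[c n, 1 - c n]%classic.
have F_sub n : F n `<=` `]0, 1[.
  by move=> x; rewrite /F /= !in_itv /= => /andP[? ?]; have := c_gt0 n; lra.
have F_cover : `]0, 1[ = \bigcup_n F n.
  apply/seteqP; split => x; last by move=> [n _ /F_sub].
  rewrite /= in_itv /= => /andP[x0 x1].
  have [k] : exists k, 0 + k.+1%:R^-1 < Num.min x (1 - x).
    by apply: ltr_add_invr; rewrite lt_min x0 subr_gt0.
  rewrite add0r lt_min => /andP[kx kx'].
  have ck : c k <= k.+1%:R^-1 by rewrite /c lef_pV2 ?posrE // ler_nat ltnS leqW.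
  have h1 := le_lt_trans ck kx; have h2 := le_lt_trans ck kx'.
  by exists k => //; rewrite /F /= in_itv /=; apply/andP; split; lra.
have F_nd : {homo F : m n / (m <= n)%N >-> (m <= n)%O}.
  move=> m n mn; rewrite subsetEset => x; rewrite /F /= !in_itv /= => /andP[? ?].
  by move: (c_antimono _ _ mn) => ?; apply/andP; split; lra.
have mF n : measurable_fun (F n) (EFin \o f).
  by apply/measurable_EFinP; exact: measurable_funS (measurable_itv _) (F_sub n) mf.
have F_ge0 n x : F n x -> (0 <= (EFin \o f) x)%E.
  by move=> /F_sub /=; rewrite in_itv /= lee_fin; exact: f0.
have := ge0_nondecreasing_set_cvg_integral (mu := mu) F_nd (fun _ => measurable_itv _) mF F_ge0.
rewrite -F_cover => cvg_int; rewrite -(cvg_lim _ cvg_int) //.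
apply: lime_le; first by apply/cvg_ex; eexists; exact: cvg_int.
by apply: nearW => n; move: (c_gt0 n) (c_le3 n) => ? ?; apply: fC; lra.
Qed.

Definition arcsine_weight (u : R) : R := (Num.sqrt u * Num.sqrt (1 - u))^-1.

Lemma arcsine_weight_ge0 (u : R) : 0 <= arcsine_weight u.
Proof. by rewrite invr_ge0 mulr_ge0 // sqrtr_ge0. Qed.

Lemma continuous_arcsine_weight (x : R) : 0 < x < 1 -> {for x, continuous arcsine_weight}.
Proof.
case/andP=> x0 x1; apply: continuousV.
  by rewrite mulf_neq0 // gt_eqF // sqrtr_gt0 // subr_gt0.
apply: continuousM; first exact: sqrt_continuous.
apply: (@continuous_comp _ _ _ (fun u : R => 1 - u)); last exact: sqrt_continuous.
by apply: continuousB; [exact: cst_continuous | exact: cvg_id].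
Qed.

Lemma measurable_arcsine_weight : measurable_fun (`]0, 1[ : set R) arcsine_weight.
Proof.
apply: open_continuous_measurable_fun; first exact: interval_open.
by move=> x; rewrite inE /= in_itv /=; exact: continuous_arcsine_weight.
Qed.

Lemma is_derive_asin_affine (x : R) : 0 < x < 1 ->
  is_derive x 1 (fun u : R => asin (2 * u - 1)) (arcsine_weight x).
Proof.
case/andP=> x0 x1.
have d_affine : is_derive x 1 (fun u : R => 2 * u - 1) 2.
  by apply: is_derive_eq; rewrite subr0 -[RHS]mulr1.
have x_range : -1 < 2 * x - 1 < 1 by apply/andP; split; lra.
have := @is_derive1_comp R asin (fun u : R => 2 * u - 1) x _ _
  (is_derive1_asin x_range) d_affine; rewrite /=.
have -> : Num.sqrt (1 - (2 * x - 1) ^+ 2) = 2 * (Num.sqrt x * Num.sqrt (1 - x)).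
  rewrite (_ : 1 - (2 * x - 1) ^+ 2 = 2 ^+ 2 * (x * (1 - x))); last by ring.
  by rewrite sqrtrM ?sqrtr_sqr ?ger0_norm ?sqrtrM //; lra.
by rewrite /arcsine_weight invfM mulrAC mulVf ?mul1r // pnatr_eq0.
Qed.

Lemma integral_itvcc_arcsine_weight_le_pi (a b : R) : 0 < a -> a < b -> b < 1 ->
  (\int[mu]_(x in `[a, b]) (arcsine_weight x)%:E <= pi%:E)%E.
Proof.
move=> a0 ab b1.
have asin_cont z : 0 < z < 1 -> {for z, continuous (fun u : R => asin (2 * u - 1))}.
  by move=> /is_derive_asin_affine [d _]; exact/differentiable_continuous/derivable1_diffP.
rewrite (@continuous_FTC2 _ _ (fun u : R => asin (2 * u - 1)) a b ab).
- rewrite -EFinB lee_fin.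
  have : asin (2 * b - 1) <= pi / 2 by apply: asin_lepi2; apply/andP; split; lra.
  have : - (pi / 2) <= asin (2 * a - 1) by apply: asin_geNpi2; apply/andP; split; lra.
  lra.
- apply: continuous_in_subspaceT => x; rewrite inE /= in_itv /= => /andP[? ?].
  by apply: continuous_arcsine_weight; apply/andP; split; lra.
- split.
  + move=> x; rewrite in_itv /= => /andP[? ?].
    by case: (@is_derive_asin_affine x) => //; apply/andP; split; lra.
  + by apply: cvg_at_right_filter; apply: asin_cont; apply/andP; split; lra.
  + by apply: cvg_at_left_filter; apply: asin_cont; apply/andP; split; lra.
- move=> x; rewrite in_itv /= => /andP[? ?].
  rewrite derive1E; apply: derive_val; apply: is_derive_asin_affine.
  by apply/andP; split; lra.
Qed.

Lemma integral_arcsine_weight_le_pi :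
  (\int[mu]_(x in (`]0%R, 1%R[ : set R)) (arcsine_weight x)%:E <= pi%:E)%E.
Proof.
apply: ge0_integral_itvoo01_le; first exact: measurable_arcsine_weight.
  by move=> x _; exact: arcsine_weight_ge0.
exact: integral_itvcc_arcsine_weight_le_pi.
Qed.

Lemma integrable_arcsine_weight : mu.-integrable (`]0, 1[ : set R) (EFin \o arcsine_weight).
Proof.
apply/integrableP; split; first by apply/measurable_EFinP; exact: measurable_arcsine_weight.
apply: le_lt_trans (le_lt_trans integral_arcsine_weight_le_pi (ltry _)).
rewrite le_eqVlt; apply/orP; left; apply/eqP; apply: eq_integral => x _.
by rewrite /comp abse_EFin ger0_norm // arcsine_weight_ge0.
Qed.

Lemma Rintegral_arcsine_weight_le_pi :
  \int[mu]_(u in (`]0, 1[ : set R)) arcsine_weight u <= pi.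
Proof.
rewrite -[pi]/(fine pi%:E); apply: fine_le => //; last exact: integral_arcsine_weight_le_pi.
by apply: integrable_fin_num => //; exact: integrable_arcsine_weight.
Qed.

Lemma integrable_scaled_arcsine_weight (k : R) :
  mu.-integrable (`]0, 1[ : set R) (EFin \o (fun u => k * arcsine_weight u)).
Proof.
apply: (@eq_integrable _ _ _ mu _ (measurable_itv _)
  (fun u => k%:E * (EFin \o arcsine_weight) u)%E).
  by move=> u _; rewrite /= EFinM.
exact: integrableZl integrable_arcsine_weight.
Qed.

End arcsine_weight.

Section holder_facts.
Context {R : realType}.

Lemma holder_CT_ge0 {T gam : R} {f : R -> R -> R} : holder_CT T gam f ->
  exists K : R, 0 <= K /\ forall t s t' s', inCT T t s -> inCT T t' s' ->
    `|f t s - f t' s'| <= K * (`|t - t'| `^ gam + `|s - s'| `^ gam).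
Proof.
case=> K HK; exists (Num.max K 0); split; first by rewrite le_max lexx orbT.
move=> t s t' s' h h'; apply: le_trans (HK _ _ _ _ h h') _.
by apply: ler_wpM2r; [rewrite addr_ge0 // powR_ge0 | rewrite le_max lexx].
Qed.

Lemma holder_CT_bounded {T gam : R} {f : R -> R -> R} : 0 < T -> 0 < gam ->
  holder_CT T gam f -> exists M : R, 0 <= M /\ forall t s, inCT T t s -> `|f t s| <= M.
Proof.
move=> T0 gam0 /holder_CT_ge0 [K [K0 HK]].
have CT_mid : inCT T (T / 2) (T / 4) by rewrite /inCT; lra.
exists (`|f (T / 2) (T / 4)| + K * (T `^ gam + T `^ gam)); split.
  by rewrite addr_ge0 // mulr_ge0 // addr_ge0 // powR_ge0.
move=> t s hts; have fK := HK _ _ _ _ hts CT_mid; case: hts => s0 [st tT].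
have powR_le_T x : `|x| <= T -> `|x| `^ gam <= T `^ gam.
  by move=> xT; apply: ge0_ler_powR; rewrite ?nnegrE // ltW.
have : `|t - T / 2| `^ gam <= T `^ gam by apply: powR_le_T; rewrite ler_norml; lra.
have : `|s - T / 4| `^ gam <= T `^ gam by apply: powR_le_T; rewrite ler_norml; lra.
have := ler_normD (f t s - f (T / 2) (T / 4)) (f (T / 2) (T / 4)).
by rewrite subrK; have := powR_ge0 T gam; nra.
Qed.

Lemma holder_continuous (phi : R -> R) (a b K gam : R) : 0 < gam -> 0 <= K ->
  (forall x y, a < x < b -> a < y < b -> `|phi x - phi y| <= K * `|x - y| `^ gam) ->
  forall z, a < z < b -> {for z, continuous phi}.
Proof.
move=> gam0 K0 Hphi z /andP[az zb].
apply/cvgrPdist_lt => e e0.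
pose r := (e / (K + 1)) `^ gam^-1.
have r0 : 0 < r by rewrite powR_gt0 // divr_gt0 //; lra.
have r_gam : r `^ gam = e / (K + 1).
  by rewrite -powRrM mulVf ?gt_eqF // powRr1 // ltW // divr_gt0 //; lra.
apply/nbhs_ballP; exists (Num.min r (Num.min (z - a) (b - z))) => /=.
  by rewrite !lt_min r0 !subr_gt0 az zb.
move=> y; rewrite /ball /= !lt_min => /andP[zy_r /andP[zy_a zy_b]].
have y_ab : a < y < b.
  move: (ler_norm (z - y)) (ler_norm (y - z)); rewrite [`|y - z|]distrC => ? ?.
  by apply/andP; split; lra.
apply: le_lt_trans (Hphi _ _ _ y_ab) _; first by rewrite az zb.
have : `|z - y| `^ gam < e / (K + 1).
  by rewrite -r_gam; apply: gt0_ltr_powR; rewrite ?nnegrE // ltW.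
rewrite ltr_pdivlMr; last lra.
have := powR_ge0 `|z - y| gam; nra.
Qed.

Lemma powR_norm_convex_le (gam a b u : R) : 0 <= gam -> 0 <= u <= 1 ->
  `|(1 - u) * a + u * b| `^ gam <= `|a| `^ gam + `|b| `^ gam.
Proof.
move=> gam0 /andP[u0 u1].
have norm_le_max : `|(1 - u) * a + u * b| <= Num.max `|a| `|b|.
  apply: le_trans (ler_normD _ _) _.
  rewrite !normrM (ger0_norm u0) ger0_norm ?subr_ge0 //.
  have : `|a| <= Num.max `|a| `|b| by rewrite le_max lexx.
  have : `|b| <= Num.max `|a| `|b| by rewrite le_max lexx orbT.
  nra.
have := powR_ge0 `|a| gam; have := powR_ge0 `|b| gam.
have := ge0_ler_powR gam0 _ _ norm_le_max; rewrite !nnegrE => /(_ (normr_ge0 _)).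
by case: (leP `|a| `|b|) => _ /(_ (normr_ge0 _)); lra.
Qed.

End holder_facts.

Lemma affine_itvoo {R : realFieldType} {s t u : R} : s < t -> 0 < u < 1 ->
  s < s + (t - s) * u < t.
Proof.
move=> st /andP[u0 u1]; have ts0 : 0 < t - s by rewrite subr_gt0.
have : 0 < (t - s) * u by rewrite mulr_gt0.
have : (t - s) * u < t - s by rewrite gtr_pMr.
by move=> ? ?; apply/andP; split; lra.
Qed.

Section hconv_holder.
Context {R : realType}.
Local Notation mu := (@lebesgue_measure R).
Variables (T gam : R) (g1 g2 : R -> R -> R) (K1 K2 M1 M2 : R).
Hypotheses (gam_gt0 : 0 < gam) (K1_ge0 : 0 <= K1) (K2_ge0 : 0 <= K2).
Hypotheses (M1_ge0 : 0 <= M1) (M2_ge0 : 0 <= M2).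
Hypothesis g1_holder : forall t s t' s', inCT T t s -> inCT T t' s' ->
  `|g1 t s - g1 t' s'| <= K1 * (`|t - t'| `^ gam + `|s - s'| `^ gam).
Hypothesis g2_holder : forall t s t' s', inCT T t s -> inCT T t' s' ->
  `|g2 t s - g2 t' s'| <= K2 * (`|t - t'| `^ gam + `|s - s'| `^ gam).
Hypothesis g1_bounded : forall t s, inCT T t s -> `|g1 t s| <= M1.
Hypothesis g2_bounded : forall t s, inCT T t s -> `|g2 t s| <= M2.

Definition hconv_integrand (t s z : R) : R :=
  g1 t z * g2 z s / (Num.sqrt (t - z) * Num.sqrt (z - s)).

Definition rescaled_integrand (t s u : R) : R :=
  g1 t (s + (t - s) * u) * g2 (s + (t - s) * u) s * arcsine_weight u.

Lemma inCT_split {t s z : R} : inCT T t s -> s < z < t -> inCT T t z /\ inCT T z s.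
Proof. by case=> s0 [st tT] /andP[sz zt]; rewrite /inCT; lra. Qed.

Lemma continuous_g1_section t s : inCT T t s ->
  forall z, s < z < t -> {for z, continuous (g1 t)}.
Proof.
move=> hts; apply: (holder_continuous (g1 t) s t K1 gam gam_gt0 K1_ge0).
move=> x y /(inCT_split hts)[hx _] /(inCT_split hts)[hy _].
by have := g1_holder _ _ _ _ hx hy; rewrite subrr normr0 powR0 ?gt_eqF // add0r.
Qed.

Lemma continuous_g2_section t s : inCT T t s ->
  forall z, s < z < t -> {for z, continuous (fun z => g2 z s)}.
Proof.
move=> hts; apply: (holder_continuous (fun z => g2 z s) s t K2 gam gam_gt0 K2_ge0).
move=> x y /(inCT_split hts)[_ hx] /(inCT_split hts)[_ hy].
by have := g2_holder _ _ _ _ hx hy; rewrite subrr normr0 powR0 ?gt_eqF // addr0.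
Qed.

Lemma continuous_hconv_integrand t s : inCT T t s ->
  {in `]s, t[, continuous (hconv_integrand t s)}.
Proof.
move=> hts z; rewrite inE /= in_itv /= => hz; case/andP: (hz) => sz zt.
apply: (@continuousM _ _ (fun z => g1 t z * g2 z s)
  (fun z => (Num.sqrt (t - z) * Num.sqrt (z - s))^-1)).
  apply: continuousM; first exact: continuous_g1_section hts _ hz.
  exact: continuous_g2_section hts _ hz.
apply: continuousV; first by rewrite mulf_neq0 // gt_eqF // sqrtr_gt0 subr_gt0.
apply: continuousM.
- apply: (@continuous_comp _ _ _ (fun z : R => t - z)); last exact: sqrt_continuous.
  by apply: continuousB; [exact: cst_continuous | exact: cvg_id].
- apply: (@continuous_comp _ _ _ (fun z : R => z - s)); last exact: sqrt_continuous.
  by apply: continuousB; [exact: cvg_id | exact: cst_continuous].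
Qed.

Lemma measurable_hconv_integrand t s : inCT T t s ->
  measurable_fun (`]s, t[ : set R) (hconv_integrand t s).
Proof.
move=> hts; apply: open_continuous_measurable_fun; first exact: interval_open.
exact: continuous_hconv_integrand.
Qed.

Lemma hconv_integrand_affine t s u : s < t -> 0 < u < 1 ->
  (t - s) * hconv_integrand t s (s + (t - s) * u) = rescaled_integrand t s u.
Proof.
move=> st /andP[u0 u1]; have ts0 : 0 < t - s by rewrite subr_gt0.
rewrite /hconv_integrand /rescaled_integrand /arcsine_weight.
rewrite (_ : t - (s + (t - s) * u) = (t - s) * (1 - u)); last by ring.
rewrite (_ : s + (t - s) * u - s = (t - s) * u); last by ring.
have sqrt_ts : Num.sqrt (t - s) * Num.sqrt (t - s) = t - s.
  by rewrite -expr2 sqr_sqrtr // ltW.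
rewrite !sqrtrM ?(ltW ts0) // -{1}sqrt_ts.
by field; rewrite !gt_eqF ?sqrtr_gt0 ?subr_gt0.
Qed.

Lemma measurable_rescaled_integrand t s : inCT T t s ->
  measurable_fun (`]0, 1[ : set R) (rescaled_integrand t s).
Proof.
move=> hts; have [_ [st _]] := hts.
apply: (eq_measurable_fun (fun u => (t - s) * hconv_integrand t s (s + (t - s) * u))).
  by move=> u; rewrite inE /= in_itv /=; exact: hconv_integrand_affine.
apply: measurable_funM; first exact: measurable_cst.
apply: (measurable_comp (measurable_itv _) _ (measurable_hconv_integrand _ _ hts)).
  move=> _ [u u01 <-]; move: u01; rewrite /= !in_itv /=; exact: affine_itvoo.
exact: measurable_funTS (measurable_affine s (t - s)).
Qed.

Lemma norm_rescaled_integrand_le t s u : inCT T t s -> 0 < u < 1 ->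
  `|rescaled_integrand t s u| <= M1 * M2 * arcsine_weight u.
Proof.
move=> hts u01; have [_ [st _]] := hts.
have [ht hs] := inCT_split hts (affine_itvoo st u01).
rewrite !normrM (ger0_norm (arcsine_weight_ge0 _)) ler_wpM2r ?arcsine_weight_ge0 //.
by apply: ler_pM => //; [exact: g1_bounded | exact: g2_bounded].
Qed.

Lemma integrable_rescaled_integrand t s : inCT T t s ->
  mu.-integrable (`]0, 1[ : set R) (EFin \o rescaled_integrand t s).
Proof.
move=> hts.
apply: le_integrable (integrable_scaled_arcsine_weight (M1 * M2)) => //.
  by apply/measurable_EFinP; exact: measurable_rescaled_integrand.
move=> u; rewrite /= in_itv /= => u01.
rewrite lee_fin [X in _ <= X]ger0_norm ?mulr_ge0 ?arcsine_weight_ge0 //.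
exact: norm_rescaled_integrand_le.
Qed.

Lemma hconv_rescaled t s : inCT T t s ->
  hconv g1 g2 t s = \int[mu]_(u in `]0, 1[) rescaled_integrand t s u.
Proof.
move=> hts; have [_ [st _]] := hts; have ts0 : 0 < t - s by rewrite subr_gt0.
have preimage_itv : (fun u => s + (t - s) * u) @^-1` `]s, t[ = `]0, 1[ :> set R.
  apply/seteqP; split => u /=; rewrite !in_itv /= => /andP[? ?];
    apply/andP; split; nra.
have eq_affine : {in (`]0, 1[ : set R), forall u,
    hconv_integrand t s (s + (t - s) * u) = (t - s)^-1 * rescaled_integrand t s u}.
  move=> u; rewrite inE /= in_itv /= => u01.
  by rewrite -(hconv_integrand_affine _ _ _ st u01) mulrA mulVf ?mul1r // gt_eqF.
rewrite /hconv (@Rintegral_affine _ s _ ts0 _ _ (measurable_itv _)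
  (measurable_hconv_integrand _ _ hts)) preimage_itv.
  rewrite (eq_Rintegral mu eq_affine) RintegralZl ?mulrA ?mulfV ?mul1r ?gt_eqF //.
  exact: integrable_rescaled_integrand.
apply: (@eq_integrable _ _ _ mu _ (measurable_itv _)
  (fun u => ((t - s)^-1)%:E * (EFin \o rescaled_integrand t s) u)%E).
  by move=> u u01; rewrite /= eq_affine ?EFinM.
by apply: integrableZl => //; exact: integrable_rescaled_integrand.
Qed.

Lemma norm_rescaled_integrandB_le t s t' s' u :
  inCT T t s -> inCT T t' s' -> 0 < u < 1 ->
  `|rescaled_integrand t s u - rescaled_integrand t' s' u| <=
  2 * (M1 * K2 + M2 * K1) * (`|t - t'| `^ gam + `|s - s'| `^ gam) * arcsine_weight u.
Proof.
move=> hts hts' u01; have [_ [st _]] := hts; have [_ [st' _]] := hts'.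
have [h1 h2] := inCT_split hts (affine_itvoo st u01).
have [h1' h2'] := inCT_split hts' (affine_itvoo st' u01).
set z := s + (t - s) * u in h1 h2 *; set z' := s' + (t' - s') * u in h1' h2' *.
set E := `|t - t'| `^ gam + `|s - s'| `^ gam.
have zz'_le : `|z - z'| `^ gam <= E.
  have -> : z - z' = (1 - u) * (s - s') + u * (t - t') by rewrite /z /z'; ring.
  rewrite /E [X in _ <= X]addrC; apply: powR_norm_convex_le; first exact: ltW.
  by case/andP: u01 => *; apply/andP; split; lra.
have := powR_ge0 `|t - t'| gam; have := powR_ge0 `|s - s'| gam => ? ?.
have zt_le : `|t - t'| `^ gam + `|z - z'| `^ gam <= 2 * E by rewrite /E in zz'_le *; lra.
have zs_le : `|z - z'| `^ gam + `|s - s'| `^ gam <= 2 * E by rewrite /E in zz'_le *; lra.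
rewrite /rescaled_integrand -/z -/z' -mulrBl normrM (ger0_norm (arcsine_weight_ge0 _)).
rewrite ler_wpM2r ?arcsine_weight_ge0 //.
set A := g1 t z; set B := g2 z s; set A' := g1 t' z'; set B' := g2 z' s'.
rewrite (_ : A * B - A' * B' = A * (B - B') + B' * (A - A')); last by ring.
apply: le_trans (ler_normD _ _) _; rewrite !normrM.
rewrite (_ : _ * E = M1 * (K2 * (2 * E)) + M2 * (K1 * (2 * E))); last by ring.
apply: lerD; apply: ler_pM => //.
- exact: g1_bounded.
- by apply: le_trans (g2_holder _ _ _ _ h2 h2') _; exact: ler_wpM2l.
- exact: g2_bounded.
- by apply: le_trans (g1_holder _ _ _ _ h1 h1') _; exact: ler_wpM2l.
Qed.

Lemma hconv_holder : holder_CT T gam (hconv g1 g2).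
Proof.
pose C := 2 * (M1 * K2 + M2 * K1).
exists (C * pi) => t s t' s' hts hts'.
set E := `|t - t'| `^ gam + `|s - s'| `^ gam.
have E_ge0 : 0 <= E by rewrite addr_ge0 // powR_ge0.
have C_ge0 : 0 <= C by rewrite mulr_ge0 // addr_ge0 // mulr_ge0.
have int := integrable_rescaled_integrand _ _ hts.
have int' := integrable_rescaled_integrand _ _ hts'.
rewrite !hconv_rescaled // -RintegralB //.
have intB : mu.-integrable (`]0, 1[ : set R)
    (EFin \o (fun u => rescaled_integrand t s u - rescaled_integrand t' s' u)).
  apply: (@eq_integrable _ _ _ mu _ (measurable_itv _)
    ((EFin \o rescaled_integrand t s) \- (EFin \o rescaled_integrand t' s'))%E).
    by move=> u _; rewrite /= EFinB.
  exact: integrableB.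
apply: le_trans (le_normr_Rintegral _ intB) _ => //.
apply: le_trans (le_Rintegral _ (integrable_norm intB)
  (integrable_scaled_arcsine_weight (C * E)) _) _ => //.
  by move=> u; rewrite /= in_itv /=; exact: norm_rescaled_integrandB_le.
rewrite RintegralZl //; last exact: integrable_arcsine_weight.
rewrite [C * pi * E]mulrAC ler_wpM2l ?(mulr_ge0 C_ge0 E_ge0) //.
exact: Rintegral_arcsine_weight_le_pi.
Qed.

End hconv_holder.

Theorem lemma3p13 (R : realType) (T gam : R) (g1 g2 : R -> R -> R) :
  0 < T -> 0 < gam -> gam <= 1 ->
  holder_CT T gam g1 -> holder_CT T gam g2 ->
  holder_CT T gam (hconv g1 g2).
Proof.
move=> T_gt0 gam_gt0 _ g1_holder g2_holder.
have [K1 [K1_ge0 HK1]] := holder_CT_ge0 g1_holder.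
have [K2 [K2_ge0 HK2]] := holder_CT_ge0 g2_holder.
have [M1 [M1_ge0 HM1]] := holder_CT_bounded T_gt0 gam_gt0 g1_holder.
have [M2 [M2_ge0 HM2]] := holder_CT_bounded T_gt0 gam_gt0 g2_holder.
by apply: (hconv_holder T gam g1 g2 K1 K2 M1 M2).
Qed.
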